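(* Let $\Sigma$ be a finite alphabet and let $\mathbf w$ be a right-infinite word over $\Sigma$ with linear factor complexity. Then the set of primitive factors $y$ of $\mathbf w$ such that $y^n$ is a factor of $\mathbf w$ for every $n\ge 1$ is finite.
   Context: A factor of $\mathbf w$ is a finite block of contiguous symbols of $\mathbf w$. A nonempty word is primitive if it is not of the form $z^m$ with $m\ge 2$. $p_{\mathbf w}(n)$ is the number of distinct factors of $\mathbf w$ of length $n$; $\mathbf w$ has linear factor complexity if there are constants $A,B$ with $p_{\mathbf w}(n)\le An+B$ for all $n$. *)

From mathcomp Require Import all_boot.
From mathcomp Require Import boolp.
Set Implicit Arguments. Unset Strict Implicit. Unset Printing Implicit Defensive.

Definition infword (T : Type) := nat -> T.

Definition factor (T : Type) (w : infword T) (x : seq T) : Prop :=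
  exists i, x = mkseq (fun k => w (i + k)) (size x).

Definition wpow (T : Type) (z : seq T) (n : nat) : seq T := flatten (nseq n z).

Definition primitive (T : Type) (y : seq T) : Prop :=
  y <> [::] /\ ~ (exists (z : seq T) (m : nat), 2 <= m /\ y = wpow z m).

Definition complexity (T : finType) (w : infword T) (n : nat) : nat :=
  #|[set t : n.-tuple T | `[< factor w (val t) >]]|.

Definition linear_complexity (T : finType) (w : infword T) : Prop :=
  exists A B : nat, forall n, complexity w n <= A * n + B.

From mathcomp Require Import all_boot.
From mathcomp Require Import boolp zify.
Set Implicit Arguments. Unset Strict Implicit. Unset Printing Implicit Defensive.

(* Call a primitive factor y of w an "infinite power" when every
   power y^n is a factor of w.  It suffices to bound the length of infinite
   powers, since there are finitely many words of bounded length.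
   1. Periodicity: two periods p, q of an infinite sequence give the period
      gcd(p, q); hence the infinite periodic word y^omega of a primitive y has
      no shift with a period strictly smaller than |y|, and two primitive
      words whose shifted periodic extensions agree on |y| + |y'| letters
      have the same length.
   2. If w eventually equals y^omega ("y is tail periodic"), step 1 shows all
      such infinite powers share one length.  Any other infinite power y has
      arbitrarily long y-periodic runs in w that end in a break; the window of
      length 4N whose y-periodic part breaks at position 2N + j is a factor of
      w, and step 1 shows that it determines |y| and j.
   3. Hence K infinite powers of distinct lengths at most N give at least
      K * 2N factors of length 4N; with K = 2A + 1 and 2N > B this contradicts
      the complexity bound A * 4N + B. *)

Section Periods.
Variable T : eqType.

Definition has_period (V : nat -> T) (d : nat) := forall k, V (k + d) = V k.

Lemma has_period_sub V p q :
  has_period V p -> has_period V q -> p <= q -> has_period V (q - p).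
Proof. by move=> hp hq pq k; rewrite -hp -addnA subnK // hq. Qed.

Lemma has_period_mul V p m : has_period V p -> has_period V (m * p).
Proof.
move=> hp; elim: m => [|m IH] k; first by rewrite mul0n addn0.
by rewrite mulSn (addnC p) addnA hp IH.
Qed.

(* Euclid's algorithm on periods: the gcd of two periods is a period. *)
Lemma has_period_gcd V p q :
  has_period V p -> has_period V q -> has_period V (gcdn p q).
Proof.
elim: {p q}(p + q) {-2}p {-2}q (leqnn (p + q)) => [|n IH] p q.
  by rewrite leqn0 addn_eq0 => /andP[/eqP-> /eqP->]; rewrite gcdn0.
move=> hn hp hq.
have [->|p0] := posnP p; first by rewrite gcd0n.
have [->|q0] := posnP q; first by rewrite gcdn0.
have [pq|qp] := leqP p q.
- rewrite -(subnK pq) gcdnDr; apply: IH => //; [lia | exact: has_period_sub].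
- rewrite gcdnC -(subnK (ltnW qp)) gcdnDr.
  apply: IH => //; [lia | exact: has_period_sub (ltnW qp)].
Qed.

Lemma has_period_unshift V l s d : 0 < l -> has_period V l ->
  has_period (fun k => V (s + k)) d -> has_period V d.
Proof.
move=> l0 hl hd.
have shift k : V k = V (s + (k + l.-1 * s)).
  by rewrite -(has_period_mul s hl k); congr V; nia.
by move=> k; rewrite (shift (k + d)) (shift k) addnAC hd.
Qed.

Lemma has_period_transfer V1 V2 p q h : 0 < p ->
  has_period V1 p -> has_period V2 q -> p + q <= h ->
  (forall k, k < h -> V1 k = V2 k) -> has_period V1 q.
Proof.
move=> p0 h1 h2 hh e k.
have red1 : V1 k = V1 (k %% p) by rewrite {1}(divn_eq k p) addnC has_period_mul.
have red2 : V1 (k + q) = V1 (k %% p + q).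
  by rewrite {1}(divn_eq k p) -addnA (addnC _ (_ + q)) has_period_mul.
have kp : k %% p < p by rewrite ltn_mod.
by rewrite red1 red2 e ?h2 ?e //; lia.
Qed.

Definition omega (x0 : T) (y : seq T) (k : nat) := nth x0 y (k %% size y).

Lemma omega_period x0 y : has_period (omega x0 y) (size y).
Proof. by move=> k; rewrite /omega modnDr. Qed.

Lemma size_wpow (z : seq T) m : size (wpow z m) = m * size z.
Proof. by rewrite /wpow size_flatten sumnE big_map big_nseq iter_addn_0 mulnC. Qed.

Lemma nth_wpow x0 (z : seq T) m k :
  k < m * size z -> nth x0 (wpow z m) k = nth x0 z (k %% size z).
Proof.
elim: m k => [|m IH] k; first by rewrite mul0n.
rewrite /wpow /= -/(wpow z m) nth_cat mulSn => hk.
have [small|large] := ltnP; first by rewrite modn_small.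
by rewrite IH; [rewrite -{2}(subnK large) modnDr | lia].
Qed.

Lemma omega_period_wpow x0 y g : 0 < g -> g <= size y -> g %| size y ->
  has_period (omega x0 y) g -> y = wpow (take g y) (size y %/ g).
Proof.
move=> g0 gy gdvd hg.
have sz_take : size (take g y) = g by rewrite size_takel.
apply: (@eq_from_nth _ x0); first by rewrite size_wpow sz_take divnK.
move=> k ky; rewrite nth_wpow ?sz_take ?divnK // nth_take ?ltn_mod //.
have red : omega x0 y k = omega x0 y (k %% g).
  by rewrite {1}(divn_eq k g) addnC has_period_mul.
have kgy : k %% g < size y by apply: leq_trans (ltn_pmod k g0) gy.
by move: red; rewrite /omega (modn_small ky) (modn_small kgy).
Qed.

Lemma primitive_no_small_period x0 y s d : primitive y -> 0 < d < size y ->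
  ~ has_period (fun k => omega x0 y (s + k)) d.
Proof.
move=> [_ not_pow] /andP[d0 dy] hd.
have y0 : 0 < size y by lia.
have hV := has_period_unshift y0 (omega_period x0 y) hd.
have hg := has_period_gcd hV (omega_period x0 y).
have g0 : 0 < gcdn d (size y) by rewrite gcdn_gt0 d0.
have gd : gcdn d (size y) <= d by apply: dvdn_leq => //; apply: dvdn_gcdl.
apply: not_pow; exists (take (gcdn d (size y)) y), (size y %/ gcdn d (size y)).
split; last by apply: omega_period_wpow => //; [lia | apply: dvdn_gcdr].
by rewrite ltn_divRL ?dvdn_gcdr // mul1n; lia.
Qed.

Lemma primitive_agree_size x0 y y' s s' h : primitive y -> primitive y' ->
  size y + size y' <= h ->
  (forall k, k < h -> omega x0 y (s + k) = omega x0 y' (s' + k)) ->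
  size y = size y'.
Proof.
move=> py py' hh e.
have pos (z : seq T) : primitive z -> 0 < size z.
  by move=> [nz _]; rewrite lt0n size_eq0; apply/eqP.
have per (z : seq T) r : has_period (fun k => omega x0 z (r + k)) (size z).
  by move=> k; rewrite addnA omega_period.
have c1 := has_period_transfer (pos _ py) (per y s) (per y' s') hh e.
have c2 : has_period (fun k => omega x0 y' (s' + k)) (size y).
  apply: has_period_transfer (pos _ py') (per y' s') (per y s) _ _;
    [by rewrite addnC; exact: hh | by move=> k hk; rewrite e].
have [lt|gt|//] := ltngtP (size y) (size y').
- by case: (primitive_no_small_period py' (introT andP (conj (pos _ py) lt)) c2).
- by case: (primitive_no_small_period py (introT andP (conj (pos _ py') gt)) c1).
Qed.

End Periods.

Lemma bounded_words_finite (T : finType) (M : nat) :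
  exists s : seq (seq T), forall y : seq T, size y <= M -> y \in s.
Proof.
exists (flatten [seq [seq tval t | t : n.-tuple T] | n <- iota 0 M.+1]) => y yM.
apply/flatten_mapP; exists (size y); first by rewrite mem_iota add0n ltnS.
by apply/mapP; exists (in_tuple y); rewrite ?mem_enum.
Qed.

Lemma card_le_functional_rel (X Y : finType) (A : {set Y}) (R : X -> Y -> Prop) :
  (forall x, exists2 u, u \in A & R x u) ->
  (forall x x' u, R x u -> R x' u -> x = x') ->
  #|X| <= #|A|.
Proof.
move=> ex funR.
pose g (u : Y) := [pick x | `[< R x u >]].
have sub : Some @: [set: X] \subset g @: A.
  apply/subsetP => _ /imsetP[x _ ->]; have [u uA xu] := ex x.
  apply/imsetP; exists u => //; rewrite /g; case: pickP => [x' /asboolP x'u|none].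
    by rewrite (funR _ _ _ xu x'u).
  by move: (none x) => /asboolP.
rewrite -cardsT -(card_imset _ (@Some_inj _)).
exact: leq_trans (subset_leq_card sub) (leq_imset_card _ _).
Qed.

Section InfinitePowers.
Variable T : finType.
Variable w : infword T.
Let x0 := w 0.

Definition infinite_power (y : seq T) :=
  factor w y /\ primitive y /\ (forall n, 1 <= n -> factor w (wpow y n)).

Definition tail_periodic (y : seq T) :=
  exists i, forall k, w (i + k) = omega x0 y k.

Lemma infinite_power_size_gt0 y : infinite_power y -> 0 < size y.
Proof. by move=> [_ [[nz _] _]]; rewrite lt0n size_eq0; apply/eqP. Qed.

Lemma long_run y L : infinite_power y ->
  exists i, forall k, k < L -> w (i + k) = omega x0 y k.
Proof.
move=> iy; have y0 := infinite_power_size_gt0 iy.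
have [_ [_ pows]] := iy; have [i ei] := pows L.+1 isT.
exists i => k kL.
have kpow : k < L.+1 * size y by apply: leq_trans (leq_pmulr _ y0); lia.
by rewrite /omega -(nth_wpow x0 kpow) ei nth_mkseq // size_wpow.
Qed.

Lemma maximal_run y N : infinite_power y -> ~ tail_periodic y ->
  exists i p, [/\ N <= p, forall k, k < p -> w (i + k) = omega x0 y k
                & w (i + p) <> omega x0 y p].
Proof.
move=> iy not_tail; have [i ei] := long_run N iy.
have mismatch : exists k, w (i + k) != omega x0 y k.
  apply: contrapT => all_eq; apply: not_tail; exists i => k.
  by apply/eqP; apply: contrapT => /negP hk; apply: all_eq; exists k.
have [p /eqP hp pmin] := ex_minnP mismatch.
exists i, p; split => [||//].
- by rewrite leqNgt; apply/negP => pN; apply: hp; apply: ei.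
- move=> k kp; apply/eqP; apply: contrapT => /negP hk.
  by move: (pmin k hk); rewrite leqNgt kp.
Qed.

(* All tail periodic infinite powers have the same length. *)
Lemma tail_periodic_size_bound :
  exists F, forall y, infinite_power y -> tail_periodic y -> size y <= F.
Proof.
have [[y0 [[_ [p0 _]] [i0 e0]]]|none] :=
  pselect (exists y, infinite_power y /\ tail_periodic y).
- exists (size y0) => y [_ [py _]] [i e].
  rewrite (@primitive_agree_size _ x0 y y0 i0 i (size y + size y0)) //.
  by move=> k _; rewrite -e -e0 !addnA (addnC i).
- by exists 0 => y iy ty; case: none; exists y.
Qed.

Definition window (q L : nat) : L.-tuple T :=
  @Tuple L T (mkseq (fun k => w (q + k)) L) (introT eqP (size_mkseq _ L)).

Definition break_pattern (y : seq T) (j : nat) (u : seq T) : Prop :=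
  exists s, (forall k, k < j -> nth x0 u k = omega x0 y (s + k)) /\
            nth x0 u j <> nth x0 u (j - size y).

Lemma break_pattern_factor y j L : infinite_power y -> ~ tail_periodic y ->
  size y <= j < L -> exists2 u : L.-tuple T, factor w u & break_pattern y j u.
Proof.
move=> iy not_tail /andP[yj jL].
have [i [p [jp run brk]]] := maximal_run j iy not_tail.
exists (window (i + (p - j)) L); first by exists (i + (p - j)); rewrite size_tuple.
exists (p - j); split => [k kj|] /=.
  by rewrite nth_mkseq -?addnA ?run //; lia.
rewrite !nth_mkseq; try lia.
have -> : i + (p - j) + j = i + p by lia.
have -> : i + (p - j) + (j - size y) = i + (p - size y) by lia.
rewrite (run (p - size y)); last by have := infinite_power_size_gt0 iy; lia.
by rewrite -omega_period subnK //; lia.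
Qed.

Lemma break_pattern_periodic_before y j j' u : size y <= j < j' ->
  break_pattern y j' u -> nth x0 u j = nth x0 u (j - size y).
Proof.
move=> /andP[yj jj'] [s [e _]].
rewrite !e; try lia.
by rewrite -(omega_period x0 y (s + (j - size y))) -addnA subnK.
Qed.

Lemma break_pattern_pos_unique y j j' u : size y <= j -> size y <= j' ->
  break_pattern y j u -> break_pattern y j' u -> j = j'.
Proof.
move=> yj yj' bj bj'; have [lt|gt|//] := ltngtP j j'.
- by exfalso; case: bj => s [_]; apply; apply: (break_pattern_periodic_before _ bj'); lia.
- by exfalso; case: bj' => s [_]; apply; apply: (break_pattern_periodic_before _ bj); lia.
Qed.

Lemma break_pattern_same_size y y' j j' u : primitive y -> primitive y' ->
  size y + size y' <= j -> size y + size y' <= j' ->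
  break_pattern y j u -> break_pattern y' j' u -> size y = size y'.
Proof.
move=> py py' hj hj' [s [e _]] [s' [e' _]].
apply: (@primitive_agree_size _ x0 y y' s s' (size y + size y')) => // k kh.
by rewrite -e ?e' //; lia.
Qed.

Lemma complexity_lower_bound (ys : seq (seq T)) N :
  (forall y, y \in ys -> [/\ infinite_power y, ~ tail_periodic y & size y <= N]) ->
  uniq (map size ys) ->
  size ys * (2 * N) <= complexity w (4 * N).
Proof.
move=> hys uniq_sizes.
pose R (ij : 'I_(size ys) * 'I_(2 * N)) (u : (4 * N).-tuple T) :=
  break_pattern (nth [::] ys ij.1) (2 * N + ij.2) u.
have hy (i : 'I_(size ys)) := hys _ (mem_nth [::] (ltn_ord i)).
rewrite -(card_ord (size ys)) -(card_ord (2 * N)) -card_prod.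
apply: (card_le_functional_rel (R := R)) => [[i j]|[i j] [i' j'] u bu bu'].
  have [iy not_tail yN] := hy i.
  have [|u fu bu] := @break_pattern_factor _ (2 * N + j) (4 * N) iy not_tail.
    by have := ltn_ord j; rewrite (leq_trans yN) /=; lia.
  by exists u; rewrite // inE; apply/asboolP.
have [[_ [py _]] _ yN] := hy i; have [[_ [py' _]] _ yN'] := hy i'.
have sizes_le : size (nth [::] ys i) + size (nth [::] ys i') <= 2 * N.
  by rewrite mul2n -addnn leq_add.
have below k : size (nth [::] ys i) + size (nth [::] ys i') <= 2 * N + k.
  exact: leq_trans sizes_le (leq_addr _ _).
have same_size := break_pattern_same_size py py' (below _) (below _) bu bu'.
have ii' : i = i'.
  apply: ord_inj; apply/eqP; rewrite -(nth_uniq 0 _ _ uniq_sizes) ?size_map //.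
  by rewrite !(nth_map [::]) // same_size.
subst i'; congr pair; apply: ord_inj; apply/eqP; rewrite -(eqn_add2l (2 * N)).
have y_le k : size (nth [::] ys i) <= 2 * N + k.
  exact: leq_trans (leq_addr _ _) (below k).
by apply/eqP; apply: (break_pattern_pos_unique (y_le _) (y_le _) bu bu').
Qed.

Lemma unbounded_not_tail_periodic :
  (forall M, exists y, infinite_power y /\ M < size y) ->
  forall M, exists y, [/\ infinite_power y, ~ tail_periodic y & M < size y].
Proof.
move=> unb M; have [F hF] := tail_periodic_size_bound.
have [y [iy yMF]] := unb (maxn M F); move: yMF; rewrite gtn_max => /andP[yM yF].
by exists y; split => // ty; move: (hF y iy ty); rewrite leqNgt yF.
Qed.

Lemma distinct_size_family :
  (forall M, exists y, [/\ infinite_power y, ~ tail_periodic y & M < size y]) ->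
  forall K, exists ys : seq (seq T), [/\ size ys = K,
    forall y, y \in ys -> infinite_power y /\ ~ tail_periodic y
    & uniq (map size ys)].
Proof.
move=> unb; elim=> [|K [ys [sz hys uys]]]; first by exists [::].
have [y [iy not_tail ylong]] := unb (\max_(z <- ys) size z).
exists (y :: ys); split; first by rewrite /= sz.
  by move=> z; rewrite inE => /orP[/eqP->|/hys].
rewrite /= uys andbT; apply/mapP => -[z zys ez].
by move: ylong; rewrite ez ltnNge (@leq_bigmax_seq _ _ xpredT size z zys isT).
Qed.

Lemma infinite_power_size_bounded :
  linear_complexity w -> exists M, forall y, infinite_power y -> size y <= M.
Proof.
move=> [A [B hAB]]; apply: contrapT => no_bound.
have unb : forall M, exists y, infinite_power y /\ M < size y.
  move=> M; apply: contrapT => hM; apply: no_bound; exists M => y iy.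
  by rewrite leqNgt; apply/negP => yM; apply: hM; exists y.
have [ys [sz hys uys]] :=
  distinct_size_family (unbounded_not_tail_periodic unb) (2 * A + 1).
pose N := (\max_(y <- ys) size y + B).+1.
have hN y : y \in ys -> [/\ infinite_power y, ~ tail_periodic y & size y <= N].
  move=> yys; have [iy nt] := hys y yys; split => //.
  apply: leq_trans (@leq_bigmax_seq _ _ xpredT size y yys isT) _.
  exact: leq_trans (leq_addr B _) (leqnSn _).
have := leq_trans (complexity_lower_bound hN uys) (hAB (4 * N)).
have BN : B < 2 * N by rewrite /N; lia.
by rewrite sz; clearbody N; nia.
Qed.

End InfinitePowers.

Theorem theorem2 (T : finType) (w : infword T) :
  linear_complexity w ->
  exists s : seq (seq T),
    forall y : seq T,
      factor w y -> primitive y -> (forall n, 1 <= n -> factor w (wpow y n)) ->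
      y \in s.
Proof.
move=> lin; have [M hM] := infinite_power_size_bounded lin.
have [s hs] := bounded_words_finite T M.
by exists s => y fy py pows; apply/hs/hM.
Qed.
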